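(* Let $r\ge2$. If $\ell\in\mathcal M^1(\mathcal R_r)$ satisfies $\ell^r\ge\log 3$, then $\min\{\ell^i: i\in[r-1]\}\le\log(4r-5)$.
   Context: $\mathcal R_r$ is the rose with one vertex and $r$ loop edges identified with $[r]=\{1,\dots,r\}$; a length function is $\ell=(\ell^1,\dots,\ell^r)\in\mathbb R^r_{>0}$. The entropy is $\mathfrak h_{\mathcal R_r}(\ell)=\lim_{t\to\infty}\frac1t\log\#\{\gamma:\ell(\gamma)\le t\}$ over based circuits $\gamma$ (cyclically reduced closed edge paths in the oriented petals), and $\mathcal M^1(\mathcal R_r)=\{\ell:\mathfrak h_{\mathcal R_r}(\ell)=1\}$. *)

From HB Require Import structures.
From mathcomp Require Import all_boot all_order all_algebra.
From mathcomp Require Import all_classical all_reals all_analysis.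
Set Implicit Arguments. Unset Strict Implicit. Unset Printing Implicit Defensive.
Import Order.TTheory GRing.Theory Num.Theory numFieldNormedType.Exports.
Local Open Scope classical_set_scope.
Local Open Scope ring_scope.

(* Oriented petals of the rose R_r: a letter is a petal index together with
   an orientation (true = positive, false = reversed). *)
Definition letter (r : nat) : finType := ('I_r * bool)%type.

Definition linv (r : nat) (a : letter r) : letter r := (a.1, ~~ a.2).

(* Cyclically reduced closed edge path: consecutive letters (cyclically,
   last followed by first) are never mutually inverse. *)
Definition cyc_reduced (r : nat) (s : seq (letter r)) : bool :=
  all (fun p => p.2 != linv p.1) (zip s (rot 1 s)).

Definition wlen (R : realType) (r : nat) (l : 'I_r -> R) (s : seq (letter r)) : R :=
  \sum_(a <- s) l a.1.

(* Number of based circuits of (combinatorial) length n with l-length <= t. *)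
Definition circ_count_n (R : realType) (r : nat) (l : 'I_r -> R) (t : R) (n : nat) : nat :=
  #|[set w : n.-tuple (letter r) | cyc_reduced w && (wlen l w <= t)]|.

Definition lmin (R : realType) (r : nat) (l : 'I_r -> R) : R :=
  \big[Num.min/1]_(i < r) l i.

(* Any circuit with l-length <= t has at most t / lmin l edges, so the
   following finite sum counts ALL based circuits gamma (nonempty) with
   l(gamma) <= t. *)
Definition circ_count (R : realType) (r : nat) (l : 'I_r -> R) (t : R) : nat :=
  \sum_(1 <= n < (Num.truncn (t / lmin l)).+2) circ_count_n l t n.

(* l lies in M^1(R_r): the entropy lim_{t->oo} (1/t) log #{gamma : l(gamma) <= t}
   exists and equals 1. *)
Definition entropy_one (R : realType) (r : nat) (l : 'I_r -> R) : Prop :=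
  (fun t : R => ln ((circ_count l t)%:R) / t) @ +oo%R --> (1 : R).

From HB Require Import structures.
From mathcomp Require Import all_boot all_order all_algebra.
From mathcomp Require Import all_classical all_reals all_analysis.
From mathcomp Require Import ring lra.
Import Order.TTheory GRing.Theory Num.Theory numFieldNormedType.Exports.
Set Implicit Arguments. Unset Strict Implicit.
Local Open Scope classical_set_scope.
Local Open Scope ring_scope.

(* Put y i = exp(e - s * l i).  If y <= 1 and the balance condition
   sum_a y a / (1 + y a) <= 1 holds (a ranging over oriented petals), then the
   correction factors 1 / (1 + y) form a potential which does not increase
   when a letter is prepended to a reduced word; hence reduced words of each
   length have total y-weight at most 2, and a geometric sum over lengths
   gives #{circuits of l-length <= t} <= C * exp(s * t).  With s < 1 this
   contradicts entropy 1 (lemma growth_rate_le). *)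

Lemma big_tuple_cons (V : nmodType) (T : finType) n (F : seq T -> V) :
  \sum_(t : n.+1.-tuple T) F t = \sum_(a : T) \sum_(t : n.-tuple T) F (a :: t).
Proof.
rewrite pair_big /= (reindex (fun p : T * n.-tuple T => [tuple of p.1 :: p.2])) //=.
exists (fun t => (thead t, [tuple of behead t])) => [[a t] _ | t _].
  by rewrite theadE; congr pair; apply: val_inj.
by rewrite [in RHS](tuple_eta t).
Qed.

Lemma linvK r : involutive (@linv r).
Proof. by case=> i u; rewrite /linv /= negbK. Qed.

Definition reduced (r : nat) (s : seq (letter r)) : bool :=
  sorted (fun a b => b != linv a) s.

Lemma cyc_reduced_reduced r (s : seq (letter r)) : cyc_reduced s -> reduced s.
Proof.
case: s => [|x p] //; rewrite /cyc_reduced rot1_cons /reduced /=.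
elim: p {1 3}x => [|b p IH] a //= /andP[ab rest].
by rewrite ab IH.
Qed.

Section ReducedWeights.
Variables (R : realType) (r : nat) (y : 'I_r -> R).
Hypothesis y_ge0 : forall i, 0 <= y i.

Definition rweight (w : seq (letter r)) : R :=
  (reduced w)%:R * \prod_(a <- w) y a.1.

Definition corr (i : 'I_r) : R := (1 + y i)^-1.

Lemma rweight_ge0 w : 0 <= rweight w.
Proof. by apply: mulr_ge0; [exact: ler0n | apply: prodr_ge0 => a _]. Qed.

Lemma rweight_cons a b t :
  rweight (a :: b :: t) = y a.1 * (b != linv a)%:R * rweight (b :: t).
Proof.
rewrite /rweight /reduced /= big_cons.
case: (b != linv a); rewrite /= ?mulr1 ?mulr0 ?mul0r ?mul1r //.
exact: mulrCA.
Qed.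

Lemma corr_split i : y i * corr i + corr i = 1.
Proof. by rewrite /corr -{2}(mul1r (_^-1)) -mulrDl addrC mulfV // gt_eqF // ltr_wpDr. Qed.

(* The balance condition under which the correction factors form a
   sub-harmonic potential for reduced words. *)
Hypothesis balanced : \sum_(a : letter r) y a.1 * corr a.1 <= 1.

Lemma sum_corr_except b : \sum_(a | b != linv a) y a.1 * corr a.1 <= corr b.1.
Proof.
rewrite (eq_bigl (fun a => a != linv b)) => [|a]; last first.
  by rewrite eq_sym (inv_eq (@linvK r)).
move: balanced; rewrite (bigD1 (linv b)) //=.
have := corr_split b.1; lra.
Qed.

(* Reduced words of length n.+1 weighted by the correction of their first
   letter have total weight at most 1: prepending a letter never increases
   this quantity. *)
Lemma sum_rweight_corr_le n :
  \sum_(a : letter r) \sum_(t : n.-tuple (letter r)) rweight (a :: t) * corr a.1 <= 1.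
Proof.
elim: n => [|n IH].
  apply: le_trans balanced; rewrite le_eqVlt; apply/orP; left; apply/eqP.
  apply: eq_bigr => a _; rewrite (big_pred1 [tuple]) => [|t]; last by apply/esym/eqP; exact: tuple0.
  by rewrite /rweight /= big_seq1 mul1r.
apply: le_trans IH.
under eq_bigr => a _ do rewrite (big_tuple_cons _ (fun t => rweight (a :: t) * corr a.1)).
rewrite exchange_big /=; apply: ler_sum => b _.
rewrite exchange_big /=; apply: ler_sum => t _.
have -> : \sum_(a : letter r) rweight [:: a, b & t] * corr a.1
        = rweight (b :: t) * \sum_(a | b != linv a) y a.1 * corr a.1.
  rewrite big_distrr [in RHS]big_mkcond /=; apply: eq_bigr => a _; rewrite rweight_cons.
  by case: (b != linv a); rewrite /= ?mulr1 ?mulr0 ?mul0r //; ring.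
by rewrite ler_wpM2l ?rweight_ge0 ?sum_corr_except.
Qed.

End ReducedWeights.

Definition cweight (R : realType) r (l : 'I_r -> R) (e s : R) (i : 'I_r) : R :=
  expR (e - s * l i).

Lemma prod_cweight (R : realType) r (l : 'I_r -> R) (e s : R) (w : seq (letter r)) :
  \prod_(a <- w) cweight l e s a.1 = expR (e * (size w)%:R - s * wlen l w).
Proof.
rewrite /wlen /cweight; elim: w => [|a w IH]; first by rewrite !big_nil !mulr0 subr0 expR0.
by rewrite !big_cons IH -expRD; congr expR; rewrite /= -addn1 natrD; ring.
Qed.

Lemma cweight_ge0 (R : realType) r (l : 'I_r -> R) (e s : R) i : 0 <= cweight l e s i.
Proof. exact: expR_ge0. Qed.

Section CircuitCount.
Variables (R : realType) (r : nat) (l : 'I_r -> R) (e s : R).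
Hypotheses (e_gt0 : 0 < e) (s_ge0 : 0 <= s).
Let y := cweight l e s.
Hypothesis y_le1 : forall i, y i <= 1.
Hypothesis balanced : \sum_(a : letter r) y a.1 * corr y a.1 <= 1.

Let y_ge0 i : 0 <= y i := cweight_ge0 l e s i.

(* Since y <= 1 every correction factor is at least 1/2, so the total weight
   of the reduced words of a given positive length is at most 2. *)
Lemma sum_rweight_le2 n : \sum_(w : n.+1.-tuple (letter r)) rweight y w <= 2.
Proof.
have sum_le := sum_rweight_corr_le y_ge0 balanced n.
rewrite (big_tuple_cons _ (rweight y)).
apply: le_trans (_ : 2 * (\sum_(a : letter r) \sum_(t : n.-tuple (letter r))
                              rweight y (a :: t) * corr y a.1) <= 2); last lra.
rewrite mulr_sumr; apply: ler_sum => a _; rewrite mulr_sumr; apply: ler_sum => t _.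
have corr_ge : 1 <= 2 * corr y a.1.
  rewrite /corr -/(2 / (1 + y a.1)) ler_pdivlMr; have := y_le1 a.1; have := y_ge0 a.1; lra.
by rewrite mulrCA -[leLHS]mulr1 ler_wpM2l // rweight_ge0.
Qed.

(* Each circuit of combinatorial length n.+1 and l-length at most t has
   reduced weight at least exp((n+1) e - s t). *)
Lemma circ_count_n_le t n :
  (circ_count_n l t n.+1)%:R <= 2 * expR (s * t - n.+1%:R * e).
Proof.
rewrite /circ_count_n (@eq_card _ _
  [pred w : n.+1.-tuple (letter r) | cyc_reduced w && (wlen l w <= t)]); last first.
  by move=> w; apply/idP/idP; rewrite in_setE.
rewrite -sum1_card natr_sum big_mkcond /=.
apply: (@le_trans _ _ (\sum_(w : n.+1.-tuple (letter r))
                        expR (s * t - n.+1%:R * e) * rweight y w)).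
  apply: ler_sum => w _; case: ifP => [/andP[cyc_w len_w] | _]; last first.
    by rewrite mulr_ge0 ?expR_ge0 // rweight_ge0.
  rewrite /rweight (cyc_reduced_reduced cyc_w) mul1r prod_cweight size_tuple -expRD.
  apply: le_trans (expR_ge1Dx _).
  have : 0 <= s * (t - wlen l w) by apply: mulr_ge0 => //; lra.
  lra.
by rewrite -big_distrr /= mulrC ler_wpM2r ?expR_ge0 ?sum_rweight_le2.
Qed.

Lemma circ_count_le t :
  (circ_count l t)%:R <= 2 / (1 - expR (- e)) * expR (s * t).
Proof.
set rho := expR (- e).
have rho_gt0 : 0 < rho by exact: expR_gt0.
have rho_lt1 : rho < 1 by rewrite /rho expR_lt1 oppr_lt0.
rewrite /circ_count natr_sum.
set N := (Num.truncn _).+2.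
apply: (@le_trans _ _ (\sum_(0 <= n < N) 2 * expR (s * t) * rho ^+ n)).
  rewrite [leRHS](@big_ltn _ _ _ 0 N) // -[leLHS]add0r.
  apply: lerD; first by rewrite !mulr_ge0 ?expR_ge0 ?exprn_ge0 ?ltW.
  rewrite big_nat_cond [leRHS]big_nat_cond; apply: ler_sum => n /andP[/andP[n_gt0 _] _].
  case: n n_gt0 => [|n] // _.
  apply: le_trans (circ_count_n_le t n) _.
  by rewrite -mulrA ler_pM2l // /rho -expRM_natl -expRD ler_expR mulrN; lra.
rewrite -big_distrr /= mulrAC ler_wpM2r ?expR_ge0 // ler_wpM2l //.
have := @geometric_le_lim R N 1 rho ler01 rho_gt0.
rewrite ger0_norm ?(ltW rho_gt0) // div1r => /(_ rho_lt1).
by rewrite /series /geometric /=; under eq_bigr do rewrite mul1r.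
Qed.

End CircuitCount.

Lemma growth_rate_le (R : realType) (f : R -> R) (C s : R) :
  (forall t, 0 <= f t) -> 1 <= C -> 0 <= s ->
  (forall t, f t <= C * expR (s * t)) ->
  (fun t => ln (f t) / t) @ +oo%R --> (1 : R) -> 1 <= s.
Proof.
move=> f_ge0 C_ge1 s_ge0 f_le rate1; rewrite leNgt; apply/negP => s_lt1.
have lnC_ge0 : 0 <= ln C by exact: ln_ge0.
have mid_lt1 : (1 + s) / 2 < 1 by lra.
have [t t_big /= f_big] := pinfty_ex_gt (num_real (2 * ln C / (1 - s)))
  (@cvgr_gt R R _ (@proper_pinfty_nbhs R) _ 1 rate1 _ mid_lt1).
have t_gt0 : 0 < t by apply: le_lt_trans t_big; rewrite divr_ge0 //; lra.
have ln_f_le : ln (f t) <= ln C + s * t.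
  have [f0 | f_gt0] := eqVneq (f t) 0.
    by rewrite f0 ln0 //; have := mulr_ge0 s_ge0 (ltW t_gt0); lra.
  have Cexp_gt0 : 0 < C * expR (s * t) by rewrite mulr_gt0 ?expR_gt0 //; lra.
  apply: le_trans (_ : ln (C * expR (s * t)) <= _).
    by rewrite ler_ln ?posrE // lt_neqAle eq_sym f_gt0 f_ge0.
  by rewrite lnM ?posrE ?expRK //; [lra | exact: expR_gt0].
move: f_big t_big; rewrite ltr_pdivlMr // ltr_pdivrMr; last lra.
nra.
Qed.

Lemma sum_letters (V : nmodType) r (F : 'I_r -> V) :
  \sum_(a : letter r) F a.1 = (\sum_(i < r) F i) *+ 2.
Proof.
rewrite -(pair_bigA _ (fun i (_ : bool) => F i)) /=.
under eq_bigr do rewrite big_bool.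
by rewrite big_split mulr2n.
Qed.

Lemma ratio_le_scaled (R : realFieldType) (x y E : R) :
  0 <= x -> 1 <= E -> 0 <= y -> y <= E * x -> y / (1 + y) <= E * (x / (1 + x)).
Proof.
move=> x_ge0 E_ge1 y_ge0 y_le; rewrite mulrA ler_pdivrMr; last lra.
rewrite mulrAC ler_pdivlMr; last lra.
have : x <= E * x by nra.
nra.
Qed.

Lemma share_lt_half (R : realFieldType) (k x : R) :
  0 < x -> x * (4 * k - 1) < 1 -> k * (2 * x / (1 + x)) < 1 / 2.
Proof. by move=> x_gt0 xk; rewrite mulrA ltr_pdivrMr; [nra | lra]. Qed.

Lemma exists_rate (R : realType) (beta c : R) :
  1 / 2 <= beta < 1 -> 2 <= c -> exists2 e, 0 < e < 1 & expR (e * c) * beta = 1.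
Proof.
move=> /andP[beta_ge beta_lt1] c_ge2.
have beta_gt0 : 0 < beta by lra.
have lnb_lt0 : ln beta < 0 by apply: ln_lt0; rewrite beta_gt0.
exists (- ln beta / c); last first.
  by rewrite divfK ?gt_eqF ?expRN ?lnK ?posrE ?mulVf ?gt_eqF //; lra.
have inv_le2 : beta^-1 <= 2 by rewrite -div1r ler_pdivrMr //; lra.
have := @ln_sublinear R beta^-1; rewrite invr_gt0 lnV ?posrE // => /(_ beta_gt0) lnb_gt.
by rewrite divr_gt0 ?ltr_pdivrMr /=; lra.
Qed.

(* For 0 <= e <= 1 the weight exp(e - (1 - e) u) decreases in u; bound it
   uniformly on u >= mu. *)
Lemma cweight_le (R : realType) r (l : 'I_r -> R) (e mu c : R) (i : 'I_r) :
  0 <= e <= 1 -> mu <= l i -> 1 + mu <= c ->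
  cweight l e (1 - e) i <= expR (- mu) * expR (e * c).
Proof. by move=> /andP[e_ge0 e_le1] mu_le c_ge; rewrite /cweight -expRD ler_expR; nra. Qed.

Lemma uniform_gap (R : realDomainType) n (P : pred 'I_n) (f : 'I_n -> R) (a : R) :
  (forall i, P i -> a < f i) -> exists2 m, a < m & forall i, P i -> m <= f i.
Proof.
move=> f_gt; exists (\big[Num.min/(a + 1)]_(i | P i) f i); last by move=> i Pi; exact: bigmin_le_cond.
by apply/bigmin_gtP; split; [rewrite ltrDl | exact: f_gt].
Qed.

Lemma balance_bound (R : realType) k (y : 'I_k.+1 -> R) (x E : R) :
  0 <= x -> 1 <= E -> (forall i, 0 <= y i) ->
  (forall i : 'I_k.+1, (i < k)%N -> y i <= E * x) -> y ord_max <= E * (1 / 3) ->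
  \sum_(a : letter k.+1) y a.1 * corr y a.1 <= E * (k%:R * (2 * x / (1 + x)) + 1 / 2).
Proof.
move=> x_ge0 E_ge1 y_ge0 y_petal y_last.
rewrite (sum_letters (fun i => y i * corr y i)) big_ord_recr /= mulr2n.
have petals : \sum_(i < k) y (widen_ord (leqnSn k) i) * corr y (widen_ord (leqnSn k) i)
                <= k%:R * (E * (x / (1 + x))).
  apply: le_trans (_ : \sum_(i < k) E * (x / (1 + x)) <= _).
    apply: ler_sum => i _; apply: ratio_le_scaled => //.
    exact: (y_petal (widen_ord (leqnSn k) i) (ltn_ord i)).
  by rewrite sumr_const card_ord mulr_natl.
have last_petal : y ord_max * corr y ord_max <= E * ((1 / 3) / (1 + 1 / 3)).
  by apply: ratio_le_scaled; rewrite // ?y_ge0; lra.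
have -> : E * (k%:R * (2 * x / (1 + x)) + 1 / 2)
        = 2 * (k%:R * (E * (x / (1 + x)))) + 2 * (E * ((1 / 3) / (1 + 1 / 3))).
  by field; lra.
lra.
Qed.

Lemma admissible_rate (R : realType) k (l : 'I_k.+1 -> R) :
  (0 < k)%N ->
  (forall i : 'I_k.+1, (i < k)%N -> ln (4 * k%:R - 1) < l i) ->
  ln 3 <= l ord_max ->
  exists2 e, 0 < e < 1 &
    let y := cweight l e (1 - e) in
    (forall i, y i <= 1) /\ \sum_(a : letter k.+1) y a.1 * corr y a.1 <= 1.
Proof.
move=> k_gt0 l_long l_last.
set A : R := 4 * k%:R - 1.
have k_ge1 : 1 <= (k%:R : R) by rewrite ler1n.
have A_ge3 : 3 <= A by rewrite /A; lra.
have ln3_gt0 : 0 < ln (3 : R) by apply: ln_gt0; lra.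
have ln3_le : ln 3 <= ln A by rewrite ler_ln ?posrE //; lra.
have [m lnA_lt_m m_le] := uniform_gap l_long.
set x := expR (- m).
have x_gt0 : 0 < x by exact: expR_gt0.
have xA_lt1 : x * A < 1.
  have expA : expR (ln A) = A by rewrite lnK // posrE; lra.
  by rewrite /x -expA -expRD expR_lt1; lra.
(* beta < 1 measures the slack in the balance condition at e = 0. *)
set beta := k%:R * (2 * x / (1 + x)) + 1 / 2.
have share_lt := share_lt_half x_gt0 xA_lt1.
have share_ge0 : 0 <= k%:R * (2 * x / (1 + x)) by rewrite mulr_ge0 ?divr_ge0 //; lra.
have beta_range : 1 / 2 <= beta < 1 by rewrite /beta; apply/andP; split; lra.
have c_ge2 : 2 <= 2 + m by lra.
have [e /andP[e_gt0 e_lt1] E_beta] := exists_rate beta_range c_ge2.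
set E := expR (e * (2 + m)) in E_beta.
have E_ge1 : 1 <= E.
  apply: le_trans (expR_ge1Dx _).
  have : 0 <= e * (2 + m) by apply: mulr_ge0; lra.
  lra.
have e01 : 0 <= e <= 1 by rewrite (ltW e_gt0) (ltW e_lt1).
exists e; first by rewrite e_gt0.
move=> y.
have y_petal : forall i : 'I_k.+1, (i < k)%N -> y i <= E * x.
  by move=> i ik; rewrite mulrC; apply: cweight_le => //; [exact: m_le | lra].
have y_last : y ord_max <= E * (1 / 3).
  rewrite mulrC (_ : 1 / 3 = expR (- ln 3)); last by rewrite expRN lnK ?posrE ?div1r.
  by apply: cweight_le => //; lra.
split; last by rewrite -E_beta; apply: balance_bound => //; [lra | exact: cweight_ge0].
have E_le2 : E <= 2 by nra.
move=> i; case: (ltnP i k) => [ik | ki]; first by have := y_petal i ik; nra.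
have -> : i = ord_max by apply/val_inj/eqP; rewrite eqn_leq ki -ltnS ltn_ord.
lra.
Qed.

Theorem mainTheorem15 (R : realType) (r : nat) (hr : (2 <= r)%N)
  (l : 'I_r -> R) (lpos : forall i, 0 < l i)
  (hM1 : entropy_one l)
  (hlast : forall i : 'I_r, val i = r.-1 -> ln 3 <= l i) :
  exists i : 'I_r, (val i < r.-1)%N /\ l i <= ln (4 * r%:R - 5).
Proof.
case: r hr l lpos hM1 hlast => [|k] // k_gt0 l _ hM1 hlast.
rewrite (_ : 4 * k.+1%:R - 5 = 4 * k%:R - 1 :> R); last by rewrite -addn1 natrD; ring.
apply: contrapT => no_short.
have l_long : forall i : 'I_k.+1, (i < k)%N -> ln (4 * k%:R - 1) < l i.
  by move=> i ik; rewrite ltNge; apply/negP => li; apply: no_short; exists i.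
have [e /andP[e_gt0 e_lt1] [y_le1 balanced]] :=
  admissible_rate k_gt0 l_long (hlast ord_max erefl).
have rho_lt1 : expR (- e) < 1 by rewrite expR_lt1 oppr_lt0.
have C_ge1 : 1 <= 2 / (1 - expR (- e)).
  by rewrite ler_pdivlMr; have := expR_gt0 (- e); lra.
have := growth_rate_le (fun t => ler0n R _) C_ge1 (_ : 0 <= 1 - e)
          (circ_count_le e_gt0 _ y_le1 balanced) hM1.
lra.
Qed.
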